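(* Let $n\ge2$, $\kappa>0$, and let $\tilde\theta:\mathbb R\to[0,\infty)$ be locally Lipschitz and nondecreasing with $\tilde\theta(s)=0$ for $s\le 0$ and $\tilde\theta(s)>0$ for $s>0$; set $\theta(a,b)=\tilde\theta(\min(a,b))$. Let $\rho:[0,\infty)\to\mathbb R^n$ be the solution of $$\frac{d\rho_j}{dt}=\kappa\sum_{k=1}^n\theta(\rho_j,\rho_k)(\rho_j-\rho_k),\qquad j=1,\dots,n,$$ with $\rho(0)\in\mathcal P$. Let $\mathcal S_M=\{j\in\{1,\dots,n\}:\rho_j(0)=\max_{1\le k\le n}\rho_k(0)\}$ and $m=|\mathcal S_M|$. Then $$\lim_{t\to\infty}\rho_j(t)=\frac1m\ \ \forall j\in\mathcal S_M,\qquad \lim_{t\to\infty}\rho_k(t)=0\ \ \forall k\notin\mathcal S_M.$$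
   Context: $\mathcal P=\{\rho\in\mathbb R^n:\rho_i\ge0\ \forall i,\ \sum_{i=1}^n\rho_i=1\}$ denotes the probability simplex. *)

From HB Require Import structures.
From mathcomp Require Import all_boot all_order all_algebra.
From mathcomp Require Import all_classical all_reals all_analysis.
Set Implicit Arguments. Unset Strict Implicit. Unset Printing Implicit Defensive.
Import Order.TTheory GRing.Theory Num.Theory.
Import numFieldNormedType.Exports.
Local Open Scope ring_scope.

Definition locally_lipschitz (R : realType) (f : R -> R) : Prop :=
  forall a b : R, exists L : R, forall x y : R,
    a <= x <= b -> a <= y <= b -> `|f x - f y| <= L * `|x - y|.

Definition in_simplex (R : realType) (n : nat) (p : 'I_n -> R) : Prop :=
  (forall i, 0 <= p i) /\ \sum_(i < n) p i = 1.

Definition theta (R : realType) (tht : R -> R) (a b : R) : R :=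
  tht (Num.min a b).

Definition argmax_set (R : realType) (n : nat) (p : 'I_n -> R) : {set 'I_n} :=
  [set j | [forall k, p k <= p j]].

From HB Require Import structures.
From mathcomp Require Import all_boot all_order all_algebra.
From mathcomp Require Import all_classical all_reals all_analysis.
From mathcomp Require Import ring lra.
Import Order.TTheory GRing.Theory Num.Theory.
Import numFieldNormedType.Exports.
Local Open Scope classical_set_scope.
Local Open Scope ring_scope.

(* Differences rho_i - rho_j and the components rho_k themselves satisfy
   |f'| <= C |f| on bounded time intervals (the flux is locally Lipschitz), so by
   a Gronwall argument equalities, strict inequalities and signs between
   components persist; in particular all components in S_M stay equal to a common
   maximum a(t), and the total mass stays 1 because the flux is antisymmetric.
   The maximum a and its gaps to the other components are nondecreasing.  While
   the mass outside S_M exceeds e, some component outside S_M exceeds e/n, which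
   pushes a upward at a fixed positive rate; as a <= 1 this cannot last.  So the
   mass outside S_M tends to 0, and the m maximal components share the rest. *)

Section RealFacts.
Context {R : realType}.
Implicit Types (a b d k s t x C : R) (f df : R -> R).

Lemma MVT_lb f df d a b : a <= b ->
  {within `[a, b], continuous f} ->
  (forall x, x \in `]a, b[ -> is_derive x 1 f (df x)) ->
  (forall x, x \in `]a, b[ -> d <= df x) ->
  d * (b - a) <= f b - f a.
Proof.
rewrite le_eqVlt => /predU1P[<- | ab] cf fd dlb; first by rewrite !subrr mulr0.
have [c cab ->] := MVT ab fd cf.
by apply: ler_wpM2r; [rewrite subr_ge0 ltW | apply: dlb].
Qed.

Lemma subset_itvcc_ge0 s t : 0 <= s -> `[s, t] `<=` `[0, +oo[.
Proof. by move=> s0 x /=; rewrite !in_itv /= andbT => /andP[/(le_trans s0)]. Qed.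

Lemma MVT_lb_ge0 f df d s t : 0 <= s <= t ->
  {within `[0, +oo[, continuous f} ->
  (forall x, 0 < x -> is_derive x 1 f (df x)) ->
  (forall x, 0 < x -> d <= df x) ->
  d * (t - s) <= f t - f s.
Proof.
move=> /andP[s0 st] cf fd dlb.
have x_gt0 x : x \in `]s, t[ -> 0 < x.
  by rewrite in_itv /= => /andP[/(le_lt_trans s0)].
apply: (MVT_lb f df) => // [|x /x_gt0/fd | x /x_gt0/dlb] //.
exact: continuous_subspaceW (subset_itvcc_ge0 s t s0) cf.
Qed.

Lemma deriv0_const_ge0 f df t : 0 <= t ->
  {within `[0, +oo[, continuous f} ->
  (forall x, 0 < x -> is_derive x 1 f (df x)) ->
  (forall x, 0 < x -> df x = 0) ->
  f t = f 0.
Proof.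
move=> t0 cf fd df0.
have t0t : (0 : R) <= 0 <= t by rewrite lexx t0.
have df_ge0 x : 0 < x -> 0 <= df x by move=> /df0 ->.
have dfN_ge0 x : 0 < x -> 0 <= - df x by move=> /df0 ->; rewrite oppr0.
have := MVT_lb_ge0 f df 0 0 t t0t cf fd df_ge0.
have := MVT_lb_ge0 (fun s => - f s) (fun s => - df s) 0 0 t t0t
  (fun x => continuousN (cf x)) (fun x x_gt0 => is_deriveN (fd x x_gt0)) dfN_ge0.
rewrite !mul0r; lra.
Qed.

Lemma is_derive_sqr_expR f df k x : is_derive x 1 f (df x) ->
  is_derive x 1 (fun t => f t * f t * expR (k * t))
    ((2 * f x * df x + k * (f x * f x)) * expR (k * x)).
Proof.
move=> fd.
have dlin : is_derive x 1 (fun t => k * t) k.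
  by apply: is_derive_eq (is_deriveZ k (is_derive_id x 1)) _; rewrite /GRing.scale /= mulr1.
have dexp : is_derive x 1 (fun t => expR (k * t)) (expR (k * x) * k).
  exact: is_derive1_comp.
have dsqr : is_derive x 1 (fun t => f t * f t) (2 * f x * df x).
  by apply: is_derive_eq (is_deriveM fd fd) _; rewrite /GRing.scale /=; ring.
by apply: is_derive_eq (is_deriveM dsqr dexp) _; rewrite /GRing.scale /=; ring.
Qed.

Lemma normM_le_sqr u v C : `|v| <= C * `|u| -> `|u * v| <= C * (u * u).
Proof.
move=> vC; have -> : C * (u * u) = `|u| * (C * `|u|).
  by rewrite [RHS]mulrCA -normrM ger0_norm // -expr2 sqr_ge0.
by rewrite normrM; apply: ler_wpM2l.
Qed.

(* f^2 e^{2Ct} is nondecreasing and f^2 e^{-2Ct} nonincreasing, so a zero of f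
   propagates in both directions. *)
Lemma gronwall_eq0 f df C a b : a <= b ->
  {within `[a, b], continuous f} ->
  (forall x, x \in `]a, b[ -> is_derive x 1 f (df x)) ->
  (forall x, x \in `]a, b[ -> `|df x| <= C * `|f x|) ->
  f a = 0 <-> f b = 0.
Proof.
move=> ab cf fd fC.
pose g k t := f t * f t * expR (k * t).
have g_cont k : {within `[a, b], continuous g k}.
  have expk_cont : continuous (fun t => expR (k * t)).
    move=> t; apply: (continuous_comp (f := fun t => k * t)).
      by apply: continuousM; [exact: cvg_cst | exact: cvg_id].
    exact: continuous_expR.
  move=> x; apply: (@continuousM R (subspace `[a, b]) (fun t => f t * f t)).
    exact: continuousM (cf x) (cf x).
  exact: continuous_subspaceT expk_cont x.
pose dg k x := (2 * f x * df x + k * (f x * f x)) * expR (k * x).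
have g_der k x : x \in `]a, b[ -> is_derive x 1 (g k) (dg k x) :=
  fun xab => is_derive_sqr_expR f df k x (fd x xab).
have fdf x : x \in `]a, b[ -> - (C * (f x * f x)) <= f x * df x <= C * (f x * f x).
  by move=> xab; rewrite -ler_norml normM_le_sqr ?fC.
have g_eq0 k x : g k x <= 0 -> f x = 0.
  rewrite pmulr_lle0 ?expR_gt0 // => ff0.
  by apply/eqP; rewrite -sqrf_eq0 eq_le sqr_ge0 expr2 ff0.
have g_up : g (2 * C) a <= g (2 * C) b.
  suff : 0 * (b - a) <= g (2 * C) b - g (2 * C) a by rewrite mul0r; lra.
  apply: (MVT_lb _ (dg (2 * C))) => // x xab.
  have := fdf x xab; rewrite /dg pmulr_lge0 ?expR_gt0 //; lra.
have g_down : g (- (2 * C)) b <= g (- (2 * C)) a.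
  suff : 0 * (b - a) <= - g (- (2 * C)) b - - g (- (2 * C)) a by rewrite mul0r; lra.
  apply: (MVT_lb (fun t => - g (- (2 * C)) t) (fun t => - dg (- (2 * C)) t)) => //.
  - by move=> x; apply: continuousN; exact: g_cont.
  - by move=> x xab; apply: is_deriveN; exact: g_der.
  - move=> x xab; have := fdf x xab.
    rewrite /dg oppr_ge0 pmulr_lle0 ?expR_gt0 //; lra.
split=> [fa0 | fb0].
- by apply: (g_eq0 (- (2 * C))); apply: le_trans g_down _; rewrite /g fa0 !mul0r.
- by apply: (g_eq0 (2 * C)); apply: le_trans g_up _; rewrite /g fb0 !mul0r.
Qed.

Lemma eq0_propagates_ge0 f df t : 0 <= t ->
  {within `[0, +oo[, continuous f} ->
  (forall x, 0 < x -> is_derive x 1 f (df x)) ->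
  (forall T, 0 <= T -> exists C, forall x, 0 < x <= T -> `|df x| <= C * `|f x|) ->
  f 0 = 0 <-> f t = 0.
Proof.
move=> t0 cf fd fC; have [C HC] := fC t t0.
have x_in x : x \in `]0, t[ -> 0 < x <= t.
  by rewrite in_itv /= => /andP[-> /ltW].
apply: (gronwall_eq0 f df C 0 t t0) => [|x /x_in/andP[x0 _]|x /x_in] //.
- exact: continuous_subspaceW (subset_itvcc_ge0 0 t (lexx 0)) cf.
- exact: fd.
- exact: HC.
Qed.

Lemma gt0_preserved_ge0 f df t : 0 <= t ->
  {within `[0, +oo[, continuous f} ->
  (forall x, 0 < x -> is_derive x 1 f (df x)) ->
  (forall T, 0 <= T -> exists C, forall x, 0 < x <= T -> `|df x| <= C * `|f x|) ->
  0 < f 0 -> 0 < f t.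
Proof.
move=> t0 cf fd fC f0; rewrite ltNge; apply/negP => ft.
have [c c0t fc0] : exists2 c, c \in `[0, t] & f c = 0.
  apply: IVT => //; first exact: continuous_subspaceW (subset_itvcc_ge0 0 t (lexx 0)) cf.
  by rewrite ge_min ft orbT le_max (ltW f0).
move: c0t; rewrite in_itv /= => /andP[c0 _].
by move: f0; rewrite (eq0_propagates_ge0 f df c c0 cf fd fC).2 // ltxx.
Qed.

Lemma ler_normB_min x y r : `|Num.min x r - Num.min y r| <= `|x - y|.
Proof.
rewrite ler_norml; have := ler_norm (x - y); have := ler_norm (y - x).
rewrite distrC.
by case: (leP x r) => xr; case: (leP y r) => yr;
  rewrite ?(min_l xr) ?(min_r (ltW xr)) ?(min_l yr) ?(min_r (ltW yr)); lra.
Qed.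

Lemma continuous_sum (T : topologicalType) n (g : 'I_n -> T -> R) (z : T) :
  (forall i, {for z, continuous (g i)}) ->
  {for z, continuous (fun y => \sum_(i < n) g i y)}.
Proof.
move=> gc; rewrite -fct_sumE; elim/big_ind: _ => //; first exact: cvg_cst.
by move=> u v cu cv; apply: continuousD.
Qed.

Lemma finite_gt0_lb (I : finType) (P : pred I) (x : I -> R) :
  (forall i, P i -> 0 < x i) -> exists2 g, 0 < g & forall i, P i -> g <= x i.
Proof.
move=> x_gt0; pose Q := \sum_(i | P i) (x i)^-1.
have Q_ge0 : 0 <= Q by apply: sumr_ge0 => i Pi; rewrite invr_ge0 ltW ?x_gt0.
exists (1 + Q)^-1 => [|i Pi]; first by rewrite invr_gt0; lra.
have : (x i)^-1 <= 1 + Q.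
  rewrite /Q (bigD1 i) //=.
  have : 0 <= \sum_(j | P j && (j != i)) (x j)^-1.
    by apply: sumr_ge0 => j /andP[Pj _]; rewrite invr_ge0 ltW ?x_gt0.
  lra.
rewrite -[X in _ <= X](invrK (1 + Q)) lef_pV2 // posrE ?invr_gt0 ?x_gt0 //; lra.
Qed.

Lemma exists_gt_share n (P : pred 'I_n) (x : 'I_n -> R) e : 0 <= e ->
  e < \sum_(i | P i) x i -> exists2 i, P i & e / n%:R < x i.
Proof.
case: n P x => [|n] P x e0; first by rewrite big_ord0; lra.
move=> e_lt; apply/exists_inP; apply: contraTT e_lt.
rewrite negb_exists_in => /forall_inP x_le; rewrite -leNgt.
apply: le_trans (_ : \sum_(i < n.+1) e / n.+1%:R <= e).
  rewrite [X in _ <= X](bigID P) /= ler_wpDr ?sumr_ge0 ?divr_ge0 //.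
  by apply: ler_sum => i /x_le; rewrite leNgt.
by rewrite sumr_const card_ord -[X in X <= _]mulr_natr divfK ?pnatr_eq0.
Qed.

End RealFacts.

Lemma argmax_set_exists {R : realType} n (p : 'I_n -> R) :
  (0 < n)%N -> exists j, j \in argmax_set p.
Proof.
move=> n_gt0; case: (@arg_maxP _ _ _ (Ordinal n_gt0) xpredT p isT) => j _ j_max.
by exists j; rewrite inE; apply/forallP => k; apply: j_max.
Qed.

Section Flux.
Variables (R : realType) (tht : R -> R).
Hypothesis tht_homo : {homo tht : x y / x <= y}.
Hypothesis tht_ge0 : forall s, 0 <= tht s.
Implicit Types (a x y r : R).

Definition flux x y := theta tht x y * (x - y).

Lemma fluxN x y : flux y x = - flux x y.
Proof. by rewrite /flux /theta minC -mulrN opprB. Qed.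

Lemma sum_flux_eq0 n (v : 'I_n -> R) :
  \sum_(i < n) \sum_(j < n) flux (v i) (v j) = 0.
Proof.
set S := LHS; have : S = - S.
  rewrite {1}/S exchange_big /= /S -sumrN; apply: eq_bigr => i _.
  by rewrite -sumrN; apply: eq_bigr => j _; rewrite fluxN.
lra.
Qed.

Lemma flux0l y : (forall s, s <= 0 -> tht s = 0) -> flux 0 y = 0.
Proof. by move=> tht_le0; rewrite /flux /theta tht_le0 ?mul0r // ge_min lexx. Qed.

Lemma flux_ge x y : y <= x -> flux x y = tht y * (x - y).
Proof. by move=> yx; rewrite /flux /theta (min_r yx). Qed.

Lemma flux_le x y a : x <= a -> y <= a -> flux x y <= flux a y.
Proof.
move=> xa ya; rewrite (flux_ge _ _ ya) /flux /theta.
case: (leP y x) => [yx | xy]; first by rewrite ler_wpM2l // lerD2r.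
apply: (@le_trans _ _ 0); first by rewrite mulr_ge0_le0 // subr_le0 ltW.
by rewrite mulr_ge0 // subr_ge0.
Qed.

Lemma flux_lipschitz B L x y r :
  (forall u v, -B <= u <= B -> -B <= v <= B -> `|tht u - tht v| <= L * `|u - v|) ->
  `|x| <= B -> `|y| <= B -> `|r| <= B ->
  `|flux x r - flux y r| <= (`|L| * (2 * B) + tht B) * `|x - y|.
Proof.
move=> tht_lipB; rewrite [`|x| <= _]ler_norml [`|y| <= _]ler_norml [`|r| <= _]ler_norml.
move=> /andP[x1 x2] /andP[y1 y2] /andP[r1 r2].
have min_in u : -B <= u <= B -> -B <= Num.min u r <= B.
  by case/andP=> u1 u2; case: (leP u r) => ur;
    rewrite ?(min_l ur) ?(min_r (ltW ur)); apply/andP; split; lra.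
have dtheta : `|theta tht x r - theta tht y r| <= `|L| * `|x - y|.
  apply: le_trans (tht_lipB _ _ (min_in _ _) (min_in _ _)) _; rewrite ?x1 ?y1 //.
  apply: le_trans (ler_wpM2r (normr_ge0 _) (ler_norm L)) _.
  by rewrite ler_wpM2l ?ler_normB_min.
have theta_le : `|theta tht y r| <= tht B.
  rewrite ger0_norm ?tht_ge0 // /theta; apply: tht_homo.
  by case: (leP y r) => yr; rewrite ?(min_l yr) ?(min_r (ltW yr)).
have -> : flux x r - flux y r =
    (theta tht x r - theta tht y r) * (x - r) + theta tht y r * (x - y).
  by rewrite /flux; ring.
apply: (le_trans (ler_normD _ _)); rewrite !normrM mulrDl.
apply: lerD; last exact: ler_wpM2r.
rewrite mulrAC; apply: ler_pM => //.
by rewrite ler_norml; apply/andP; split; lra.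
Qed.

End Flux.
Arguments flux {R} tht x y.

Section Dynamics.
Variables (R : realType) (n : nat) (kappa : R) (tht : R -> R)
  (rho : 'I_n -> R -> R).
Hypothesis kappa_gt0 : 0 < kappa.
Hypothesis tht_lip : locally_lipschitz tht.
Hypothesis tht_homo : {homo tht : x y / x <= y}.
Hypothesis tht_ge0 : forall s, 0 <= tht s.
Hypothesis tht_le0 : forall s, s <= 0 -> tht s = 0.
Hypothesis rho_cont : forall j, {within `[0, +oo[, continuous (rho j)}.
Implicit Types (s t x y : R).

Definition drift t x := kappa * \sum_(k < n) flux tht x (rho k t).

Hypothesis rho_ode : forall j t, 0 < t -> is_derive t 1 (rho j) (drift t (rho j t)).

Lemma drift0 t : drift t 0 = 0.
Proof. by rewrite /drift big1 ?mulr0 // => k _; rewrite flux0l. Qed.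

Lemma rho_bounded {T} : 0 <= T ->
  exists B, forall k t, 0 <= t <= T -> `|rho k t| <= B.
Proof.
move=> T0.
have /fin_all_exists[Bk rho_le] : forall k, exists Bk : R,
    forall t, 0 <= t <= T -> `|rho k t| <= Bk.
  move=> k.
  have ck := continuous_subspaceW (subset_itvcc_ge0 0 T (lexx 0)) (rho_cont k).
  have [c1 _ c1_max] := EVT_max T0 ck; have [c2 _ c2_min] := EVT_min T0 ck.
  exists (`|rho k c1| + `|rho k c2|) => t tT.
  have tin : t \in `[0, T] by rewrite in_itv.
  have := c1_max t tin; have := c2_min t tin.
  have := ler_norm (rho k c1); have := ler_norm (- rho k c2); rewrite normrN.
  have := normr_ge0 (rho k c1); have := normr_ge0 (rho k c2).
  by move=> *; rewrite ler_norml; apply/andP; split; lra.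
exists (\sum_k `|Bk k|) => k t tT; apply: le_trans (rho_le k t tT) _.
apply: le_trans (ler_norm _) _.
by rewrite (bigD1 k) //= lerDl; exact: sumr_ge0.
Qed.

Lemma drift_lipschitz B : exists C, forall t x y, (forall k, `|rho k t| <= B) ->
  `|x| <= B -> `|y| <= B -> `|drift t x - drift t y| <= C * `|x - y|.
Proof.
have [L tht_lipB] := tht_lip (- B) B; pose K := `|L| * (2 * B) + tht B.
exists (kappa * (n%:R * K)) => t x y rhoB xB yB.
rewrite /drift -mulrBr normrM gtr0_norm // -mulrA ler_pM2l // -sumrB.
rewrite -mulrA mulr_natl -[n in _ *+ n]card_ord -sumr_const.
apply: le_trans (ler_norm_sum _ _ _) _.
by apply: ler_sum => k _; apply: flux_lipschitz.
Qed.

Lemma drift_rho_lipschitz i j T : 0 <= T -> exists C, forall t, 0 < t <= T ->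
  `|drift t (rho i t) - drift t (rho j t)| <= C * `|rho i t - rho j t|.
Proof.
move=> T0; have [B rhoB] := rho_bounded T0; have [C drift_lip] := drift_lipschitz B.
exists C => t /andP[t0 tT]; have rhoBt k : `|rho k t| <= B by apply: rhoB; rewrite (ltW t0).
exact: drift_lip.
Qed.

Lemma drift_rho_bound k T : 0 <= T -> exists C, forall t, 0 < t <= T ->
  `|drift t (rho k t)| <= C * `|rho k t|.
Proof.
move=> T0; have [B rhoB] := rho_bounded T0; have [C drift_lip] := drift_lipschitz B.
exists C => t /andP[t0 tT]; have rhoBt l : `|rho l t| <= B by apply: rhoB; rewrite (ltW t0).
have B_ge0 : 0 <= B := le_trans (normr_ge0 _) (rhoBt k).
have := drift_lip t (rho k t) 0 rhoBt (rhoBt k).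
by rewrite normr0 drift0 !subr0; apply.
Qed.

Lemma rho_eq_preserved {i j t} : 0 <= t -> rho i 0 = rho j 0 -> rho i t = rho j t.
Proof.
move=> t0 rho_ij; apply/eqP; rewrite -subr_eq0; apply/eqP.
have [+ _] := eq0_propagates_ge0 (fun s => rho i s - rho j s)
  (fun s => drift s (rho i s) - drift s (rho j s)) t t0
  (fun s => continuousB (rho_cont i s) (rho_cont j s))
  (fun s s_gt0 => is_deriveB (rho_ode i s s_gt0) (rho_ode j s s_gt0))
  (drift_rho_lipschitz i j).
by apply; rewrite rho_ij subrr.
Qed.

Lemma rho_lt_preserved {i j t} : 0 <= t -> rho i 0 < rho j 0 -> rho i t < rho j t.
Proof.
move=> t0 rho_ij; rewrite -subr_gt0.
have := (gt0_preserved_ge0 (fun s => rho j s - rho i s)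
  (fun s => drift s (rho j s) - drift s (rho i s)) t t0
  (fun s => continuousB (rho_cont j s) (rho_cont i s))
  (fun s s_gt0 => is_deriveB (rho_ode j s s_gt0) (rho_ode i s s_gt0))
  (drift_rho_lipschitz j i)).
by apply; rewrite subr_gt0.
Qed.

Lemma rho_ge0 k t : 0 <= t -> 0 <= rho k 0 -> 0 <= rho k t.
Proof.
move=> t0; rewrite le_eqVlt => /predU1P[rho0 | rho_gt0].
  by rewrite -(eq0_propagates_ge0 _ _ t t0 (rho_cont k) (rho_ode k) (drift_rho_bound k)).1.
exact/ltW/(gt0_preserved_ge0 _ _ t t0 (rho_cont k) (rho_ode k) (drift_rho_bound k)).
Qed.

Lemma sum_rho_const t : 0 <= t -> \sum_(k < n) rho k t = \sum_(k < n) rho k 0.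
Proof.
move=> t0; apply: (deriv0_const_ge0 (fun s => \sum_(k < n) rho k s)
  (fun s => \sum_(k < n) drift s (rho k s)) t t0).
- by move=> s; apply: continuous_sum => k; exact: rho_cont.
- move=> s s_gt0; have := is_derive_sum (fun k => rho_ode k s s_gt0).
  by rewrite fct_sumE.
- by move=> s _; rewrite /drift -mulr_sumr sum_flux_eq0 mulr0.
Qed.

Hypothesis n_gt0 : (0 < n)%N.
Hypothesis rho0_simplex : in_simplex (fun j => rho j 0).
Hypothesis tht_gt0 : forall s, 0 < s -> 0 < tht s.
Local Notation SM := (argmax_set (fun j => rho j 0)).

Definition tail_mass t := \sum_(k < n | k \notin SM) rho k t.

Lemma rho_ge0_simplex k t : 0 <= t -> 0 <= rho k t.
Proof. by move=> t0; apply: rho_ge0 => //; exact: rho0_simplex.1. Qed.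

Lemma sum_rho_eq1 {t} : 0 <= t -> \sum_(k < n) rho k t = 1.
Proof. by move=> t0; rewrite sum_rho_const //; exact: rho0_simplex.2. Qed.

Lemma rho_le1 k t : 0 <= t -> rho k t <= 1.
Proof.
move=> t0; rewrite -(sum_rho_eq1 t0) (bigD1 k) //= lerDl.
by apply: sumr_ge0 => l _; exact: rho_ge0_simplex.
Qed.

Lemma rho_le_argmax j l t : j \in SM -> 0 <= t -> rho l t <= rho j t.
Proof.
rewrite inE => /forallP j_max t0; have := j_max l.
rewrite le_eqVlt => /predU1P[rho_lj | rho_lj].
  by rewrite (rho_eq_preserved t0 rho_lj).
exact/ltW/(rho_lt_preserved t0).
Qed.

Lemma rho_argmax_eq i j t : i \in SM -> j \in SM -> 0 <= t -> rho i t = rho j t.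
Proof. by move=> iSM jSM t0; apply/le_anti; rewrite !rho_le_argmax. Qed.

Lemma rho_lt_argmax0 j k : j \in SM -> k \notin SM -> rho k 0 < rho j 0.
Proof.
move=> jSM; apply: contraNT; rewrite -leNgt => rho_jk.
rewrite inE; apply/forallP => l; apply: le_trans rho_jk.
exact: rho_le_argmax.
Qed.

Lemma drift_argmax_ge j k t : j \in SM -> 0 < t ->
  kappa * (tht (rho k t) * (rho j t - rho k t)) <= drift t (rho j t).
Proof.
move=> jSM t_gt0; have rho_le l := rho_le_argmax j l t jSM (ltW t_gt0).
rewrite ler_pM2l // (bigD1 k) //= flux_ge // lerDl.
by apply: sumr_ge0 => l _; rewrite flux_ge // mulr_ge0 ?subr_ge0.
Qed.

Lemma rho_argmax_homo j s t : j \in SM -> 0 <= s <= t -> rho j s <= rho j t.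
Proof.
move=> jSM st; rewrite -subr_ge0.
have := MVT_lb_ge0 _ _ 0 _ _ st (rho_cont j) (rho_ode j).
rewrite mul0r; apply=> u u_gt0.
by have := drift_argmax_ge j j u jSM u_gt0; rewrite subrr !mulr0.
Qed.

Lemma argmax_gap_homo j k t : j \in SM -> 0 <= t ->
  rho j 0 - rho k 0 <= rho j t - rho k t.
Proof.
move=> jSM t0; rewrite -subr_ge0.
have t0t : (0 : R) <= 0 <= t by rewrite lexx t0.
have := MVT_lb_ge0 (fun s => rho j s - rho k s)
  (fun s => drift s (rho j s) - drift s (rho k s)) 0 _ _ t0t.
rewrite mul0r; apply=> [s||s s_gt0].
- exact: continuousB (rho_cont j s) (rho_cont k s).
- by move=> s s_gt0; exact: is_deriveB (rho_ode j s s_gt0) (rho_ode k s s_gt0).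
rewrite subr_ge0 ler_pM2l //; apply: ler_sum => l _.
by apply: flux_le => //; apply: rho_le_argmax => //; exact: ltW.
Qed.

Lemma tail_massE j t : j \in SM -> 0 <= t ->
  tail_mass t = 1 - #|SM|%:R * rho j t.
Proof.
move=> jSM t0; rewrite -{1}(sum_rho_eq1 t0) (bigID (mem SM)) /=.
have -> : \sum_(i < n | i \in SM) rho i t = #|SM|%:R * rho j t.
  rewrite (eq_bigr (fun _ => rho j t)) => [|i iSM]; last exact: rho_argmax_eq.
  by rewrite sumr_const mulr_natl.
by rewrite /tail_mass addrC addrK.
Qed.

Lemma rho_le_tail_mass k t : k \notin SM -> 0 <= t -> rho k t <= tail_mass t.
Proof.
move=> kSM t0; rewrite /tail_mass (bigD1 k) //= lerDl.
by apply: sumr_ge0 => l _; exact: rho_ge0_simplex.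
Qed.

Lemma tail_mass_ge0 {t} : 0 <= t -> 0 <= tail_mass t.
Proof. by move=> t0; apply: sumr_ge0 => k _; exact: rho_ge0_simplex. Qed.

Lemma tail_mass_nincr s t : 0 <= s <= t -> tail_mass t <= tail_mass s.
Proof.
move=> /[dup] /andP[s0 st] sst; have [j jSM] := argmax_set_exists _ (fun j => rho j 0) n_gt0.
rewrite !(tail_massE j _ jSM) ?(le_trans s0) // lerD2l lerN2.
by rewrite ler_wpM2l ?rho_argmax_homo.
Qed.

Lemma tail_mass_small {e} : 0 < e -> exists T, 0 <= T /\ tail_mass T <= e.
Proof.
move=> e_gt0; apply: contrapT => tail_big.
have [j jSM] := argmax_set_exists _ (fun j => rho j 0) n_gt0.
have gap0_gt0 k : k \notin SM -> 0 < rho j 0 - rho k 0.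
  by rewrite subr_gt0; exact: rho_lt_argmax0.
have [g g_gt0 g_le] := finite_gt0_lb _ [pred k | k \notin SM] _ gap0_gt0.
pose d := kappa * (tht (e / n%:R) * g).
have d_gt0 : 0 < d by rewrite !mulr_gt0 ?tht_gt0 ?divr_gt0 ?ltr0n.
have drift_ge u : 0 < u -> d <= drift u (rho j u).
  move=> u_gt0; have : e < tail_mass u.
    by rewrite ltNge; apply/negP => tail_le; apply: tail_big; exists u; rewrite ltW.
  case/(exists_gt_share _ _ _ _ (ltW e_gt0)) => k kSM rho_k.
  apply: le_trans (drift_argmax_ge j k u jSM u_gt0); rewrite ler_pM2l //.
  apply: ler_pM; rewrite ?tht_ge0 ?(ltW g_gt0) //; first exact/tht_homo/ltW.
  exact: le_trans (g_le k kSM) (argmax_gap_homo j k u jSM (ltW u_gt0)).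
have t_ge0 : 0 <= 2 / d by rewrite divr_ge0 // ltW.
have T0 : (0 : R) <= 0 <= 2 / d by rewrite lexx t_ge0.
have := MVT_lb_ge0 _ _ _ _ _ T0 (rho_cont j) (rho_ode j) drift_ge.
rewrite subr0 mulrCA divff ?gt_eqF // mulr1.
have := rho_le1 j _ t_ge0; have := rho_ge0_simplex j 0 (lexx 0); lra.
Qed.

Lemma tail_mass_cvg0 : tail_mass t @[t --> +oo] --> 0.
Proof.
apply/cvgrPdist_le => e e_gt0; have [T [T0 tail_le]] := tail_mass_small e_gt0.
exists T; split; first exact: num_real.
move=> t Tt; have t0 : 0 <= t := le_trans T0 (ltW Tt).
rewrite sub0r normrN ger0_norm ?tail_mass_ge0 //.
by apply: le_trans tail_le; apply: tail_mass_nincr; rewrite T0 ltW.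
Qed.

Lemma rho_notargmax_cvg0 k : k \notin SM -> rho k t @[t --> +oo] --> 0.
Proof.
move=> kSM; apply: (squeeze_cvgr _ (cvg_cst 0) tail_mass_cvg0).
near=> t; have t0 : 0 <= t by near: t; exact: nbhs_pinfty_ge.
by rewrite rho_ge0_simplex ?rho_le_tail_mass.
Unshelve. all: by end_near. Qed.

Lemma rho_argmax_cvg j : j \in SM -> rho j t @[t --> +oo] --> (#|SM|%:R^-1 : R).
Proof.
move=> jSM; have m_pos : (0 < #|SM|)%N by apply/card_gt0P; exists j.
have m_gt0 : 0 < #|SM|%:R :> R by rewrite ltr0n.
apply: (squeeze_cvgr (f := fun t => #|SM|%:R^-1 - tail_mass t) _ _
  (cvg_cst (#|SM|%:R^-1 : R))).
  near=> t; have t0 : 0 <= t by near: t; exact: nbhs_pinfty_ge.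
  have rhoE : rho j t = (1 - tail_mass t) / #|SM|%:R.
    by rewrite (tail_massE j t jSM t0); field; rewrite gt_eqF.
  have q_le1 : #|SM|%:R^-1 <= 1 :> R by rewrite invf_le1 // ler1n.
  have tail_ge0 := tail_mass_ge0 t0.
  have tailq_le : tail_mass t * #|SM|%:R^-1 <= tail_mass t by rewrite ler_piMr.
  have tailq_ge0 : 0 <= tail_mass t * #|SM|%:R^-1.
    by apply: mulr_ge0; rewrite // invr_ge0 ltW.
  by rewrite rhoE mulrBl mul1r; apply/andP; split; lra.
by rewrite -[X in _ --> X]subr0; apply: cvgB; [exact: cvg_cst | exact: tail_mass_cvg0].
Unshelve. all: by end_near. Qed.

End Dynamics.

Theorem theorem3p1 (R : realType) (n : nat) (kappa : R) (tht : R -> R)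
  (rho : 'I_n -> R -> R) :
  (2 <= n)%N -> 0 < kappa ->
  locally_lipschitz tht ->
  {homo tht : x y / x <= y} ->
  (forall s, 0 <= tht s) ->
  (forall s, s <= 0 -> tht s = 0) ->
  (forall s, 0 < s -> 0 < tht s) ->
  (* rho is a solution on [0, +oo): continuous on [0,+oo), differentiable
     on (0,+oo) and satisfying the ODE there *)
  (forall j, {within `[0, +oo[, continuous (rho j)}) ->
  (forall j (t : R), 0 < t ->
     is_derive t 1 (rho j)
       (kappa * \sum_(k < n) theta tht (rho j t) (rho k t) * (rho j t - rho k t))) ->
  in_simplex (fun j => rho j 0) ->
  let SM := argmax_set (fun j => rho j 0) in
  let m := #|SM| in
  (forall j, j \in SM -> rho j t @[t --> +oo] --> ((m%:R)^-1 : R)) /\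
  (forall k, k \notin SM -> rho k t @[t --> +oo] --> (0 : R)).
Proof.
move=> n_ge2 kappa_gt0 tht_lip tht_homo tht_ge0 tht_le0 tht_gt0 rho_cont rho_ode
  rho0_simplex SM m.
have n_gt0 : (0 < n)%N := ltnW n_ge2.
by split=> [j | k]; [exact: rho_argmax_cvg | exact: rho_notargmax_cvg0].
Qed.
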